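(* Let $U\ge 2$ and let $X\subseteq\{-U,\dots,U\}$ be a set of nonzero integers. Then $$\sum_{x,y\in X}\frac{1}{H(\frac xy)}\le O(U\log U).$$
   Context: For a nonzero rational $q$, its height $H(q)$ is $\max(|a|,|b|)$ where $q=\frac ab$ with $a,b$ coprime integers. The $O(\cdot)$ hides an absolute constant. *)

From Stdlib Require Import Reals.
From mathcomp Require Import all_boot all_order all_algebra.
From mathcomp Require Import Rstruct.
Set Implicit Arguments. Unset Strict Implicit. Unset Printing Implicit Defensive.
Import Order.TTheory GRing.Theory Num.Theory.

(* Height of a rational q = a/b in lowest terms: max(|a|,|b|).
   MathComp's rat stores q as numq q / denq q with coprime numq, denq, denq > 0. *)
Definition height (q : rat) : nat := maxn `|numq q|%N `|denq q|%N.

From Stdlib Require Import Reals.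
From mathcomp Require Import all_boot all_order all_algebra.
From mathcomp Require Import Rstruct.
From mathcomp Require Import ring lra zify.
Import Order.TTheory GRing.Theory Num.Theory.
Local Open Scope ring_scope.

(* Write a = |x|, b = |y| and g = gcd(a, b).  Then H(x/y) = max(a, b)/g, so
   1/H(x/y) is the d = g term of the sum of d/max(a, b) over the common
   divisors d <= U of a and b.  Exchanging summations, a fixed d contributes
   at most 2 floor(U/d) over 1 <= a, b <= U: by symmetry it suffices to sum
   over a <= b, and a column b divisible by d contributes (b/d) * (d/b) = 1.
   Summing over d gives 2U(1 + ln U), and the signs of x and y a factor 4. *)

Lemma ln_le_subr1 (y : R) : 0 < y -> ln y <= y - 1.
Proof.
move=> /RltP y0; have /RleP := exp_ineq1_le (ln y).
rewrite exp_ln // RplusE R1E; lra.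
Qed.

Lemma inv_natS_le_ln_diff (n : nat) : (0 < n)%N ->
  n.+1%:R^-1 <= ln n.+1%:R - ln n%:R :> R.
Proof.
move=> n0; set m : R := n.+1%:R.
have m0 : 0 < m by rewrite ltr0n.
have En : n%:R = (1 - m^-1) * m.
  by rewrite mulrBl mul1r mulVf ?gt_eqF // /m -natr1 addrK.
have q0 : 0 < 1 - m^-1.
  by rewrite -(mulfK (lt0r_neq0 m0) (1 - m^-1)) -En divr_gt0 ?ltr0n.
(* [lra] reads [m^-1] as an atom only when [m] is opaque. *)
clearbody m.
have -> : ln n%:R = ln (1 - m^-1)%R + ln m.
  by rewrite En -RmultE ln_mult //; exact/RltP.
have := ln_le_subr1 _ q0; lra.
Qed.

Lemma inv2_lt_ln_nat U : (2 <= U)%N -> 2^-1 < ln U%:R :> R.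
Proof.
move=> U2; have /RltP := ln_lt_2.
rewrite RinvE IZRposE INRE => /lt_le_trans; apply.
move: U2; rewrite leq_eqVlt => /predU1P[<- //|U_gt2].
by apply/ltW/RltP/ln_increasing; apply/RltP; rewrite ?ltr_nat.
Qed.

Lemma harmonic_le_ln (N : nat) : (0 < N)%N ->
  \sum_(1 <= d < N.+1) d%:R^-1 <= 1 + ln N%:R :> R.
Proof.
elim: N => [//|[|N] IH] _.
  by rewrite big_nat1 invr1 -INRE /= ln_1 addr0.
rewrite big_nat_recr //=.
apply: le_trans (lerD (IH isT) (inv_natS_le_ln_diff _ (ltn0Sn N))) _; lra.
Qed.

Lemma sum_square_le_triangle {R : numDomainType} (F : nat -> nat -> R) m n :
    (forall a b, 0 <= F a b) -> (forall a b, F a b = F b a) ->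
  \sum_(m <= a < n) \sum_(m <= b < n) F a b
    <= 2 * \sum_(m <= b < n) \sum_(m <= a < b.+1) F a b.
Proof.
move=> F_ge0 FC.
set T := \sum_(m <= b < n) \sum_(m <= a < n | (a <= b)%N) F a b.
have -> : \sum_(m <= b < n) \sum_(m <= a < b.+1) F a b = T.
  apply: eq_big_nat => b /andP[_ bn]; exact: big_nat_widen.
have split_le a b :
    F a b <= (if (a <= b)%N then F a b else 0) + (if (b <= a)%N then F a b else 0).
  by case: (leqP a b) => [_|/ltnW ->]; rewrite ?addr0 ?add0r // lerDl; case: ifP.
apply: le_trans (_ : \sum_(m <= a < n) \sum_(m <= b < n)
  ((if (a <= b)%N then F a b else 0) + (if (b <= a)%N then F a b else 0)) <= _).
  by apply: ler_sum => a _; apply: ler_sum => b _; exact: split_le.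
rewrite mulr2n mulrDl mul1r; under eq_bigr do rewrite big_split /=.
rewrite big_split /= exchange_big /=.
rewrite /T; apply: lerD; apply: ler_sum => b _; rewrite [leRHS]big_mkcond;
  by apply: ler_sum => a _; rewrite ?[F b a]FC.
Qed.

Lemma height_mul_gcd (x y : int) : y != 0 ->
  (gcdn `|x| `|y| * height (x%:~R / y%:~R) = maxn `|x| `|y|)%N.
Proof.
move=> y0; case: divqP => [/eqP|k q _]; first by rewrite (negPf y0).
by rewrite !abszM /height -maxnMr -muln_gcdr (eqP (coprime_num_den q)) muln1.
Qed.

Section DivisorWeights.

Variable R : realFieldType.

Definition dvd_weight (d a b : nat) : R :=
  if (d %| a)%N && (d %| b)%N then d%:R / (maxn a b)%:R else 0.

Lemma dvd_weight_ge0 d a b : 0 <= dvd_weight d a b.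
Proof. by rewrite /dvd_weight; case: ifP => // _; exact: divr_ge0. Qed.

Lemma dvd_weightC d a b : dvd_weight d a b = dvd_weight d b a.
Proof. by rewrite /dvd_weight andbC maxnC. Qed.

Lemma sum_dvd_weight_col d b : (0 < d)%N -> (0 < b)%N ->
  \sum_(1 <= a < b.+1) dvd_weight d a b = (d %| b)%:R.
Proof.
move=> d0 b0; rewrite /dvd_weight.
have [db|_] := boolP (d %| b)%N; last by rewrite big1 // => a _; rewrite andbF.
under eq_big_nat => a /andP[_ ab] do
  rewrite andbT (maxn_idPr (ab : (a <= b)%N)) -mulrb.
have q0 : (0 < b %/ d)%N by rewrite divn_gt0 // dvdn_leq.
rewrite sumrMnr -divn_count_dvd -[in b%:R](divnK db) natrM.
rewrite -[_ *+ (b %/ d)]mulr_natr mulr1n.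
by field; rewrite !pnatr_eq0 -!lt0n d0 q0.
Qed.

Lemma sum_dvd_weight_square d N : (0 < d)%N ->
  \sum_(1 <= a < N.+1) \sum_(1 <= b < N.+1) dvd_weight d a b <= 2 * (N %/ d)%:R.
Proof.
move=> d0.
apply: le_trans (sum_square_le_triangle _ 1 N.+1 (dvd_weight_ge0 d) (dvd_weightC d)) _.
rewrite divn_count_dvd natr_sum ler_pM2l //.
by apply: ler_sum_nat => b /andP[b0 _]; rewrite sum_dvd_weight_col.
Qed.

Lemma sum_dvd_weight_le U :
  \sum_(1 <= a < U.+1) \sum_(1 <= b < U.+1) \sum_(1 <= d < U.+1) dvd_weight d a b
    <= 2 * U%:R * \sum_(1 <= d < U.+1) d%:R^-1.
Proof.
under eq_bigr do rewrite exchange_big_nat.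
rewrite exchange_big_nat mulr_sumr; apply: ler_sum_nat => d /andP[d0 _].
apply: le_trans (sum_dvd_weight_square _ U d0) _.
rewrite -mulrA ler_pM2l // ler_pdivlMr ?ltr0n // -natrM ler_nat.
exact: leq_divM.
Qed.

Lemma inv_height_le_sum_dvd_weight U (x y : int) :
    x != 0 -> y != 0 -> (`|x| <= U)%N ->
  (height (x%:~R / y%:~R))%:R^-1 <= \sum_(1 <= d < U.+1) dvd_weight d `|x| `|y|.
Proof.
move=> x0 y0 xU; set g := gcdn `|x| `|y|.
have g0 : (0 < g)%N by rewrite gcdn_gt0 absz_gt0 x0.
have gU : (g <= U)%N by rewrite (leq_trans (dvdn_leq _ (dvdn_gcdl _ _))) ?absz_gt0.
have -> : (height (x%:~R / y%:~R))%:R^-1 = dvd_weight g `|x| `|y|.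
  rewrite /dvd_weight dvdn_gcdl dvdn_gcdr -height_mul_gcd // natrM invfM mulrA.
  by rewrite divff ?mul1r // pnatr_eq0 -lt0n.
rewrite (bigD1_seq g) ?iota_uniq ?mem_index_iota ?g0 //= lerDl.
by apply: sumr_ge0 => d _; exact: dvd_weight_ge0.
Qed.

End DivisorWeights.

Lemma ler_psum_uniq_sub {R : numDomainType} (I : eqType) (s s' : seq I)
    (F : I -> R) :
    (forall i, 0 <= F i) -> uniq s -> uniq s' -> {subset s <= s'} ->
  \sum_(i <- s) F i <= \sum_(i <- s') F i.
Proof.
move=> F0 us us' ss'.
have s_perm : perm_eq s [seq i <- s' | i \in s].
  apply: uniq_perm => //; first exact: filter_uniq.
  by move=> i; rewrite mem_filter andb_idr //; exact: ss'.
rewrite (perm_big _ s_perm) big_filter big_mkcond.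
by apply: ler_sum => i _; case: ifP.
Qed.

Definition signed_range (U : nat) : seq int :=
  [seq a%:Z | a <- index_iota 1 U.+1] ++ [seq - a%:Z | a <- index_iota 1 U.+1].

Lemma signed_range_uniq U : uniq (signed_range U).
Proof.
rewrite cat_uniq !map_inj_uniq ?iota_uniq ?andbT //=; last 2 first.
- by move=> a b /eqP; rewrite eqr_opp => /eqP[].
- by move=> a b [].
apply/hasPn => _ /mapP[a a_in ->]; apply/mapP => -[b b_in].
move: a_in b_in; rewrite !mem_index_iota; lia.
Qed.

Lemma mem_signed_range U (x : int) :
  x != 0 -> (`|x| <= U)%N -> x \in signed_range U.
Proof.
rewrite mem_cat; case: x => [a|a] x0 xU; apply/orP; [left|right]; apply/mapP.
- by exists a => //; rewrite mem_index_iota; lia.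
- by exists a.+1; rewrite ?NegzE // mem_index_iota ltnS.
Qed.

Lemma sum_signed_range {R : nmodType} U (F : nat -> R) :
  \sum_(x <- signed_range U) F `|x|%N = (\sum_(1 <= a < U.+1) F a) *+ 2.
Proof.
rewrite big_cat !big_map /=; under [X in _ + X]eq_bigr do rewrite abszN.
by rewrite mulr2n.
Qed.

Lemma sum_absz_le {R : numDomainType} U (X : seq int) (F : nat -> R) :
    (forall a, 0 <= F a) -> uniq X ->
    (forall x, x \in X -> x != 0 /\ (`|x| <= U)%N) ->
  \sum_(x <- X) F `|x|%N <= (\sum_(1 <= a < U.+1) F a) *+ 2.
Proof.
move=> F0 uX HX; rewrite -sum_signed_range.
apply: ler_psum_uniq_sub => //; first exact: signed_range_uniq.
by move=> x /HX[x0 xU]; exact: mem_signed_range.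
Qed.

Theorem lemma11p4 :
  exists C : R, forall (U : nat) (X : seq int),
    (2 <= U)%N -> uniq X ->
    (forall x, x \in X -> x != 0 /\ (absz x <= U)%N) ->
    \sum_(x <- X) \sum_(y <- X) ((height (x%:~R / y%:~R : rat))%:R : R)^-1
      <= C * (U%:R : R) * ln (U%:R : R).
Proof.
exists 24 => U X U2 uX HX.
pose W a b := \sum_(1 <= d < U.+1) dvd_weight R d a b.
have W_ge0 a b : 0 <= W a b by apply: sumr_ge0 => d _; exact: dvd_weight_ge0.
have le_W : \sum_(x <- X) \sum_(y <- X) ((height (x%:~R / y%:~R : rat))%:R : R)^-1
    <= \sum_(x <- X) \sum_(y <- X) W `|x|%N `|y|%N.
  rewrite !big_seq; apply: ler_sum => x /HX[x0 xU].
  rewrite !big_seq; apply: ler_sum => y /HX[y0 _].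
  exact: inv_height_le_sum_dvd_weight.
have le_signs : \sum_(x <- X) \sum_(y <- X) W `|x|%N `|y|%N
    <= (\sum_(1 <= a < U.+1) \sum_(1 <= b < U.+1) W a b) *+ 2 *+ 2.
  apply: le_trans (_ : \sum_(x <- X) (\sum_(1 <= b < U.+1) W `|x|%N b) *+ 2 <= _).
    by apply: ler_sum => x _; exact: sum_absz_le.
  rewrite sumrMnl lerMn2r /=.
  by apply: sum_absz_le => // a; apply: sumr_ge0 => b _.
have := sum_dvd_weight_le R U; have := harmonic_le_ln _ (ltnW U2).
have := inv2_lt_ln_nat _ U2; have U0 : 0 <= U%:R :> R by [].
move: le_W le_signs; rewrite /W; nra.
Qed.
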